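(* For $n\in\mathbb{N}_{\geq1}$ let $\widetilde c(n)$ be the number of rooted binary trees with $n$ leaves and minimal Colless index, and $\widetilde s(n)$ the number of rooted binary trees with $n$ leaves and minimal Sackin index. Then $\widetilde c(n)\leq\widetilde s(n)$.
   Context: A rooted binary tree with $n\geq 2$ leaves is a rooted tree whose root has degree 2 and all other internal nodes have degree 3; for $n=1$ it is a single node; trees are counted up to isomorphism. For a node $u$ let $n_u$ be the number of leaves in the subtree rooted at $u$. The Colless index is $\mathcal{C}(T)=\sum_v|n_{v_1}-n_{v_2}|$ over internal nodes $v$ with children $v_1,v_2$; the Sackin index is $\mathcal{S}(T)=\sum_u n_u$ over internal nodes $u$. Minimality is among all rooted binary trees with $n$ leaves. *)

From mathcomp Require Import all_boot.
Set Implicit Arguments. Unset Strict Implicit. Unset Printing Implicit Defensive.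

(* Rooted binary trees as ordered (plane) trees; "up to isomorphism" is
   handled by the isomorphism test [tiso] (swapping children). *)
Inductive tree : Type := Leaf | Node of tree & tree.

Fixpoint leaves (t : tree) : nat :=
  match t with Leaf => 1 | Node a b => leaves a + leaves b end.

Fixpoint colless (t : tree) : nat :=
  match t with
  | Leaf => 0
  | Node a b => ((leaves a - leaves b) + (leaves b - leaves a)) + colless a + colless b
  end.

Fixpoint sackin (t : tree) : nat :=
  match t with
  | Leaf => 0
  | Node a b => leaves a + leaves b + sackin a + sackin b
  end.

Fixpoint tiso (t u : tree) : bool :=
  match t, u with
  | Leaf, Leaf => true
  | Node a b, Node c d => (tiso a c && tiso b d) || (tiso a d && tiso b c)
  | _, _ => false
  end.

(* [trees_f f n]: all ordered trees with n leaves, computed with fuel f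
   (fuel f >= n suffices, since subtrees have strictly fewer leaves). *)
Fixpoint trees_f (f n : nat) : seq tree :=
  match f with
  | 0 => [::]
  | f'.+1 =>
      if n == 1 then [:: Leaf]
      else flatten [seq [seq Node a b | a <- trees_f f' i, b <- trees_f f' (n - i)]
                   | i <- iota 1 n.-1]
  end.

Definition trees (n : nat) : seq tree := trees_f n n.

Fixpoint nclasses (s : seq tree) : nat :=
  match s with
  | [::] => 0
  | t :: s' => (if has (tiso t) s' then 0 else 1) + nclasses s'
  end.

Definition min_colless_trees (n : nat) : seq tree :=
  [seq t <- trees n | all (fun t' => colless t <= colless t') (trees n)].

Definition min_sackin_trees (n : nat) : seq tree :=
  [seq t <- trees n | all (fun t' => sackin t <= sackin t') (trees n)].

Definition ctilde (n : nat) : nat := nclasses (min_colless_trees n).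
Definition stilde (n : nat) : nat := nclasses (min_sackin_trees n).

From HB Require Import structures.
From mathcomp Require Import all_boot zify.
Set Implicit Arguments. Unset Strict Implicit. Unset Printing Implicit Defensive.

(* Let M(t) be the sum over internal nodes of min(n_{v1}, n_{v2}).  Since
   |p - q| + 2 min(p, q) = p + q, the Sackin index is C + 2M.  The maximally
   balanced tree B_n (every node splits its leaves into ceiling and floor
   halves) both minimises S, because n |-> S(B_n) is discretely convex, and
   maximises M.  So a Colless-minimal tree T satisfies
   S(T) = C(T) + 2M(T) <= C(B_n) + 2M(B_n) = S(B_n), i.e. it is
   Sackin-minimal, and counting isomorphism classes is monotone under
   inclusion. *)

Section EquivalenceClasses.

Variables (T : eqType) (e : rel T).
Hypotheses (e_refl : reflexive e) (e_sym : symmetric e) (e_trans : transitive e).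

Lemma pairwise_inequiv_eq s :
  pairwise (fun x y => ~~ e x y) s -> {in s &, forall x y, e x y -> x = y}.
Proof.
pose r x y := (x == y) || ~~ e x y.
have r_refl : reflexive r by move=> x; rewrite /r eqxx.
have r_sym : symmetric r by move=> x y; rewrite /r eq_sym e_sym.
move=> pw; have /allrelP all_r : all2rel r s.
  rewrite -pairwise_all2rel //; apply: sub_pairwise pw => x y.
  by rewrite /r => ->; rewrite orbT.
by move=> x y xs ys exy; move: (all_r x y xs ys); rewrite /r exy orbF => /eqP.
Qed.

Lemma pairwise_inequiv_leq_size s1 s2 :
  pairwise (fun x y => ~~ e x y) s1 -> {in s1, forall x, has (e x) s2} ->
  size s1 <= size s2.
Proof.
move=> pw cover; pose g x := nth x s2 (find (e x) s2).
have e_g x : x \in s1 -> e x (g x) by move/cover; apply: nth_find.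
have g_in x : x \in s1 -> g x \in s2 by move/cover; rewrite has_find; apply: mem_nth.
rewrite -(size_map g); apply: uniq_leq_size; last by move=> _ /mapP[x /g_in gx ->].
rewrite map_inj_in_uniq; first by apply: pairwise_uniq pw => x; rewrite e_refl.
move=> x y xs ys gxy; apply: (pairwise_inequiv_eq pw xs ys).
by apply: e_trans (e_g x xs) _; rewrite gxy e_sym e_g.
Qed.

End EquivalenceClasses.

Fixpoint tree_eqb (t u : tree) : bool :=
  match t, u with
  | Leaf, Leaf => true
  | Node a b, Node c d => tree_eqb a c && tree_eqb b d
  | _, _ => false
  end.

Lemma tree_eqP : Equality.axiom tree_eqb.
Proof.
elim=> [|a IHa b IHb] [|c d] /=; try by constructor.
case: (IHa c) => [->|ne_ac]; last by constructor; case.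
case: (IHb d) => [->|ne_bd]; last by constructor; case.
by constructor.
Qed.

HB.instance Definition _ := hasDecEq.Build tree tree_eqP.

Lemma tiso_refl : reflexive tiso.
Proof. by elim=> //= a -> b ->. Qed.

Lemma tiso_sym : symmetric tiso.
Proof.
move=> t u; elim: t u => [|a IHa b IHb] [|c d] //=.
by rewrite IHa IHb (IHa d) (IHb c) (andbC (tiso d a)).
Qed.

Lemma tiso_trans : transitive tiso.
Proof.
move=> u t; elim: t u => [|a IHa b IHb] [|c d] [|e f] //=.
case/orP=> /andP[ac bd]; case/orP=> /andP[ce df].
- by rewrite (IHa _ _ ac ce) (IHb _ _ bd df).
- by rewrite (IHa _ _ ac ce) (IHb _ _ bd df) orbT.
- by rewrite (IHa _ _ ac df) (IHb _ _ bd ce) orbT.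
- by rewrite (IHa _ _ ac df) (IHb _ _ bd ce).
Qed.

Fixpoint reps (s : seq tree) : seq tree :=
  match s with
  | [::] => [::]
  | t :: s' => if has (tiso t) s' then reps s' else t :: reps s'
  end.

Lemma nclasses_reps s : nclasses s = size (reps s).
Proof. by elim: s => //= t s ->; case: ifP. Qed.

Lemma reps_subset s : {subset reps s <= s}.
Proof.
elim: s => //= t s IH x; case: ifP => _; first by move/IH => xs; rewrite inE xs orbT.
by rewrite !inE => /predU1P[-> | /IH ->]; rewrite ?eqxx ?orbT.
Qed.

Lemma reps_cover s : {in s, forall x, has (tiso x) (reps s)}.
Proof.
elim: s => //= t s IH x; case/predU1P=> [-> | /IH x_reps]; case: ifP => // t_s.
- case/hasP: t_s => y /IH /hasP[z z_reps yz] ty.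
  by apply/hasP; exists z => //; apply: tiso_trans ty yz.
- by rewrite /= tiso_refl.
- by rewrite /= x_reps orbT.
Qed.

Lemma reps_pairwise s : pairwise (fun x y => ~~ tiso x y) (reps s).
Proof.
elim: s => //= t s IH; case: ifP => // /negbT t_s.
rewrite pairwise_cons IH andbT; apply/allP => y /reps_subset ys.
by apply: contra t_s => ty; apply/hasP; exists y.
Qed.

Lemma leq_nclasses s1 s2 : {subset s1 <= s2} -> nclasses s1 <= nclasses s2.
Proof.
move=> s12; rewrite !nclasses_reps.
apply: (pairwise_inequiv_leq_size tiso_refl tiso_sym tiso_trans (reps_pairwise s1)).
by move=> x /reps_subset /s12 /reps_cover.
Qed.

Lemma leaves_gt0 t : 0 < leaves t.
Proof. by elim: t => //= a a_gt0 b _; rewrite addn_gt0 a_gt0. Qed.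

Lemma mem_trees_f f t : leaves t <= f -> t \in trees_f f (leaves t).
Proof.
elim: t f => [|a IHa b IHb] [|f] //=; first by have := leaves_gt0 a; lia.
move=> le_f; have a_gt0 := leaves_gt0 a; have b_gt0 := leaves_gt0 b.
rewrite ifF; last by apply/eqP; lia.
apply/flattenP; exists [seq Node x y | x <- trees_f f (leaves a),
                         y <- trees_f f (leaves a + leaves b - leaves a)].
  by apply/mapP; exists (leaves a); rewrite // mem_iota; lia.
by rewrite addKn; apply: allpairs_f; [apply: IHa | apply: IHb]; lia.
Qed.

Lemma leaves_trees_f f n t : t \in trees_f f n -> leaves t = n.
Proof.
elim: f n t => [|f IH] n t //=.
case: ifP => [/eqP -> | _]; first by rewrite inE => /eqP ->.
case/flattenP=> s /mapP[i]; rewrite mem_iota => i_range ->.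
by case/allpairsP=> [[a b] [/= /IH a_i /IH b_i ->]] /=; lia.
Qed.

Lemma mem_trees n t : (t \in trees n) = (leaves t == n).
Proof. by apply/idP/eqP => [/leaves_trees_f // | <-]; apply: mem_trees_f. Qed.

Fixpoint sum_min_leaves (t : tree) : nat :=
  match t with
  | Leaf => 0
  | Node a b => minn (leaves a) (leaves b) + sum_min_leaves a + sum_min_leaves b
  end.

Lemma sackin_colless t : sackin t = colless t + 2 * sum_min_leaves t.
Proof. by elim: t => //= a -> b ->; lia. Qed.

(* [f] is fuel; [bal] uses [f = n], which is enough by [balf_fuel]. *)
Fixpoint balf (f n : nat) : tree :=
  match f with
  | 0 => Leaf
  | f'.+1 => if n <= 1 then Leaf else Node (balf f' (uphalf n)) (balf f' n./2)
  end.

Definition bal n := balf n n.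

Lemma balf_fuel f g n : n <= f -> n <= g -> balf f n = balf g n.
Proof.
elim: f g n => [|f IH] [|g] n //= le_nf le_ng; try by rewrite ifT //; lia.
by case: ifP => // /negbT n_gt1; congr Node; apply: IH; lia.
Qed.

Lemma bal_small n : n <= 1 -> bal n = Leaf.
Proof. by case: n => [|[|]]. Qed.

Lemma bal_rec n : 1 < n -> bal n = Node (bal (uphalf n)) (bal n./2).
Proof.
case: n => [|n] // n_gt1.
rewrite [bal _]/bal [balf _.+1 _]/= ifF; last lia.
by congr Node; apply: balf_fuel; lia.
Qed.

Lemma bal_addn x y : 0 < x -> 0 < y -> x <= y.+1 -> y <= x.+1 ->
  bal (x + y) = Node (bal x) (bal y) \/ bal (x + y) = Node (bal y) (bal x).
Proof.
move=> x_gt0 y_gt0 x_le y_le; rewrite bal_rec; last lia.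
by case: (leqP y x) => cmp; [left | right]; congr (Node (bal _) (bal _)); lia.
Qed.

Lemma leaves_bal n : 0 < n -> leaves (bal n) = n.
Proof.
elim/ltn_ind: n => n IH n_gt0.
have [n_le1 | n_gt1] := leqP n 1; first by rewrite bal_small /=; lia.
by rewrite bal_rec //= !IH; lia.
Qed.

Section DiscreteConvexity.

Variable f : nat -> nat.
Hypothesis f_convex : forall k, 0 < k -> f k.+1 + f k.+1 <= f k + f k.+2.

Lemma convex_increment_mono p q : 0 < p -> p <= q -> f p.+1 + f q <= f p + f q.+1.
Proof.
move=> p_gt0; elim: q => [|q IH] le_pq; first lia.
have [le_pq' | lt_qp] := leqP p q; last by rewrite (_ : p = q.+1) 1?addnC; lia.
by have := IH le_pq'; have := f_convex (leq_trans p_gt0 le_pq'); lia.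
Qed.

Lemma convex_balanced_split i j : 0 < i -> 0 < j ->
  f (uphalf (i + j)) + f (i + j)./2 <= f i + f j.
Proof.
move=> i_gt0 j_gt0; wlog le_ij : i j i_gt0 j_gt0 / i <= j.
  move=> W; have [le_ij | /ltnW le_ji] := leqP i j; first exact: W.
  by rewrite [i + j]addnC [f i + _]addnC; apply: W.
have [d] := ubnP (j - i).
elim: d i j i_gt0 j_gt0 le_ij => // d IH i j i_gt0 j_gt0 le_ij lt_ji.
have [le_ji1 | lt1_ji] := leqP (j - i) 1.
  by rewrite (_ : uphalf (i + j) = j) 1?(_ : (i + j)./2 = i) 1?addnC; lia.
(* Moving [i] and [j] one step closer together does not increase [f i + f j]. *)
have := IH i.+1 j.-1; rewrite (_ : i.+1 + j.-1 = i + j); last lia.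
have := convex_increment_mono (p := i) (q := j.-1); rewrite prednK; last lia.
lia.
Qed.

End DiscreteConvexity.

Lemma sackin_bal_split n x y :
  x + y = n -> 0 < x -> 0 < y -> x <= y.+1 -> y <= x.+1 ->
  sackin (bal n) = n + sackin (bal x) + sackin (bal y).
Proof.
move=> <- x_gt0 y_gt0 x_le y_le.
by case: (bal_addn x_gt0 y_gt0 x_le y_le) => -> /=; rewrite !leaves_bal //; lia.
Qed.

Lemma sackin_bal_convex k : 0 < k ->
  sackin (bal k.+1) + sackin (bal k.+1) <= sackin (bal k) + sackin (bal k.+2).
Proof.
elim/ltn_ind: k => k IH k_gt0.
have [k_le1 | k_gt1] := leqP k 1; first by rewrite (_ : k = 1) //; lia.
have [y [[k_even | k_odd] y_gt0]] : exists y, (k = y + y \/ k = y.+1 + y) /\ 0 < y.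
  by exists k./2; split; lia.
(* For odd [k] the claim reduces to convexity at [k./2]. *)
- have := @sackin_bal_split k y y; have := @sackin_bal_split k.+1 y.+1 y.
  have := @sackin_bal_split k.+2 y.+1 y.+1; lia.
- have := IH y (ltac:(lia)) y_gt0.
  have := @sackin_bal_split k y.+1 y; have := @sackin_bal_split k.+1 y.+1 y.+1.
  have := @sackin_bal_split k.+2 y.+2 y.+1; lia.
Qed.

Lemma sackin_bal_min t : sackin (bal (leaves t)) <= sackin t.
Proof.
elim: t => //= a IHa b IHb; have a_gt0 := leaves_gt0 a; have b_gt0 := leaves_gt0 b.
rewrite bal_rec /=; last lia.
rewrite !leaves_bal; try lia.
have := convex_balanced_split sackin_bal_convex a_gt0 b_gt0; lia.
Qed.

Lemma sum_min_leaves_bal_rec n :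
  sum_min_leaves (bal n) =
    n./2 + sum_min_leaves (bal (uphalf n)) + sum_min_leaves (bal n./2).
Proof.
have [n_le1 | n_gt1] := leqP n 1; first by rewrite !bal_small //=; lia.
by rewrite bal_rec //= !leaves_bal; lia.
Qed.

Lemma sum_min_leaves_bal_split n x y :
  x + y = n -> 0 < x -> 0 < y -> x <= y.+1 -> y <= x.+1 ->
  sum_min_leaves (bal n) = n./2 + sum_min_leaves (bal x) + sum_min_leaves (bal y).
Proof.
move=> <- x_gt0 y_gt0 x_le y_le.
by case: (bal_addn x_gt0 y_gt0 x_le y_le) => -> /=; rewrite !leaves_bal //; lia.
Qed.

Lemma sum_min_leaves_bal_super a b :
  minn a b + sum_min_leaves (bal a) + sum_min_leaves (bal b)
    <= sum_min_leaves (bal (a + b)).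
Proof.
have [N] := ubnP (a + b); elim: N a b => // N IH a b lt_ab.
have [-> | a_gt0] := posnP a; first by rewrite /= min0n !add0n.
have [-> | b_gt0] := posnP b; first by rewrite /= minn0 !addn0.
(* The halves of [a + b] are [uphalf a + b./2] and [a./2 + uphalf b]. *)
have := IH (uphalf a) b./2 ltac:(lia); have := IH a./2 (uphalf b) ltac:(lia).
have := sum_min_leaves_bal_rec a; have := sum_min_leaves_bal_rec b.
have := @sum_min_leaves_bal_split (a + b) (uphalf a + b./2) (a./2 + uphalf b).
lia.
Qed.

Lemma sum_min_leaves_max t : sum_min_leaves t <= sum_min_leaves (bal (leaves t)).
Proof.
elim: t => //= a IHa b IHb.
by have := sum_min_leaves_bal_super (leaves a) (leaves b); lia.
Qed.

Lemma min_colless_sub_min_sackin n :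
  0 < n -> {subset min_colless_trees n <= min_sackin_trees n}.
Proof.
move=> n_gt0 t; rewrite !mem_filter => /andP[/allP colless_min t_n].
rewrite t_n andbT; apply/allP => t'; move: t_n; rewrite !mem_trees => /eqP t_n /eqP t'_n.
have bal_n : bal n \in trees n by rewrite mem_trees leaves_bal.
have := colless_min _ bal_n; have := sum_min_leaves_max t; have := sackin_bal_min t'.
by rewrite t_n t'_n !sackin_colless; lia.
Qed.

Theorem corollary4 (n : nat) : 1 <= n -> ctilde n <= stilde n.
Proof. by move=> n_gt0; apply/leq_nclasses/min_colless_sub_min_sackin. Qed.
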